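(* In the setting of the context, $S^2=(q|_B)^{-1}$.
   Context: $k$ is a field; $C_R(S)=\{r\in R:rs=sr\ \forall s\in S\}$. $N\subseteq M$ is a strongly separable, irreducible extension of $k$-algebras: $C_M(N)=k1$ and there are an $N$-bimodule map $E:M\to N$ and $x_1,\dots,x_n,y_1,\dots,y_n\in M$ with $\sum_iE(mx_i)y_i=m=\sum_ix_iE(y_im)$ for all $m\in M$, $E(1)\neq0$, $\sum_ix_iy_i\neq0$; normalized so that $E(1)=1$, whence $\sum_ix_iy_i=\lambda^{-1}1$ with $0\neq\lambda\in k$. Basic construction: given $S\subseteq R$, an $S$-bimodule map $E_S:R\to S$ with $E_S(1)=1$ and $r_i,s_i\in R$ with $\sum_iE_S(rr_i)s_i=r=\sum_ir_iE_S(s_ir)$ and $\sum_ir_is_i=\lambda^{-1}1$, set $R_1=R\otimes_SR$ with product $(a\otimes b)(c\otimes d)=aE_S(bc)\otimes d$, unit $\sum_ir_i\otimes s_i$, $R\subseteq R_1$ via $r\mapsto\sum_irr_i\otimes s_i$, Jones idempotent $e=1\otimes1$, $E_R:R_1\to R$, $a\otimes b\mapsto\lambda ab$; then $E_R$, $\lambda^{-1}r_i\otimes1$, $1\otimes s_i$ satisfy the same conditions with the same $\lambda$. From $(N\subseteq M,E)$ get $M_1,e_1,E_M$; from $(M\subseteq M_1,E_M)$ get $M_2,e_2,E_{M_1}$. Let $A=C_{M_1}(N)$, $B=C_{M_2}(M)$, $C=C_{M_2}(N)$. Depth 2 is assumed: $M_1$ is free as right $M$-module with basis in $A$, $M_2$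 free as right $M_1$-module with basis in $B$. Let $F=E_M\circ E_{M_1}$; on $C$ it takes values in $k1\cong k$ and is faithful. $q:C\to C$ is the Nakayama automorphism of $F$: $F(q(c)c')=F(c'c)$ for all $c,c'\in C$; it maps $B$ onto $B$. The antipode $S:B\to B$ is the linear map defined by $E_{M_1}(be_1e_2)=E_{M_1}(e_2e_1S(b))$ for all $b\in B$ (well defined since $b\mapsto E_{M_1}(e_2e_1b)$ is a linear bijection $B\to A$). *)

From HB Require Import structures.
From mathcomp Require Import all_boot all_order all_algebra.
Set Implicit Arguments. Unset Strict Implicit. Unset Printing Implicit Defensive.
Import GRing.Theory.
Local Open Scope ring_scope.

Definition klin (k : fieldType) (U V : lmodType k) (g : U -> V) : Prop :=
  forall (c : k) (x y : U), g (c *: x + y) = c *: g x + g y.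

Definition balanced (k : fieldType) (R : algType k) (S : R -> Prop)
    (V : lmodType k) (f : R -> R -> V) : Prop :=
  [/\ forall a, klin (f a),
      forall b, klin (fun a => f a b)
    & forall a z b, S z -> f (a * z) b = f a (z * b)].

Definition is_tensor_over (k : fieldType) (R : algType k) (S : R -> Prop)
    (T : lmodType k) (tau : R -> R -> T) : Prop :=
  balanced S tau /\
  forall (V : lmodType k) (f : R -> R -> V), balanced S f ->
    (exists g : T -> V, klin g /\ forall a b, g (tau a b) = f a b) /\
    (forall g g' : T -> V, klin g -> klin g' ->
       (forall a b, g (tau a b) = g' (tau a b)) -> forall t, g t = g' t).

Definition bc_incl (k : fieldType) (R : algType k) (R1 : algType k)
    (n : nat) (r s : 'I_n -> R) (tau : R -> R -> R1) (x : R) : R1 :=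
  \sum_(i < n) tau (x * r i) (s i).

(* Basic construction: R1 = R (x)_S R (via tau, a (x) b = tau a b) with product
   (a (x) b)(c (x) d) = a E_S(bc) (x) d, unit sum_i r_i (x) s_i, and
   E_R : R1 -> R, a (x) b |-> lam a b.  Jones idempotent is tau 1 1. *)
Definition is_basic_construction (k : fieldType) (R : algType k)
    (S : R -> Prop) (ES : R -> R) (n : nat) (r s : 'I_n -> R) (lam : k)
    (R1 : algType k) (tau : R -> R -> R1) (ER : R1 -> R) : Prop :=
  [/\ is_tensor_over S tau,
      forall a b c d, tau a b * tau c d = tau (a * ES (b * c)) d,
      1 = \sum_(i < n) tau (r i) (s i),
      klin ER
    & forall a b, ER (tau a b) = lam *: (a * b)].

Definition centralizer (k : fieldType) (R : algType k) (P : R -> Prop)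
    (x : R) : Prop := forall y, P y -> x * y = y * x.

(* Everything is transported to A = C_{M_1}(N) along the bijection
   beta b = lam^-1 E_{M_1}(b e_1 e_2) of B onto A, whose inverse is
   a |-> lam^-1 sum_i x_i a e_2 e_1 y_i.  Put
   theta a = lam^-1 sum_i E_M(e_1 x_i a) e_1 y_i, an injective map of A into A.
   The defining identity of S says beta = theta o beta o S.  Since every element
   of M_1 is a sum of products a m with a in A and m in M (depth 2), elements of
   M_2 are separated by the values F(d a e_2 a') with a, a' in A; these
   a e_2 a' lie in C, and the Nakayama identity then yields
   beta o q = theta^2 o beta on B.  Hence theta^2 (beta (S^2 (q b))) =
   beta (q b) = theta^2 (beta b) and beta (q (S^2 b)) = theta^2 (beta (S^2 b))
   = beta b, and injectivity of theta and beta concludes. *)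

From HB Require Import structures.
From mathcomp Require Import all_boot all_order all_algebra.
Set Implicit Arguments. Unset Strict Implicit. Unset Printing Implicit Defensive.
Import GRing.Theory.
Local Open Scope ring_scope.

Section KLinear.
Variables (k : fieldType) (U V W : lmodType k).

Lemma klinD (g : U -> V) : klin g -> forall u v, g (u + v) = g u + g v.
Proof. by move=> lin_g u v; rewrite -{1}[u]scale1r lin_g scale1r. Qed.

Lemma klin0 (g : U -> V) : klin g -> g 0 = 0.
Proof. by move=> lin_g; apply: (addrI (g 0)); rewrite -klinD // !addr0. Qed.

Lemma klinZ (g : U -> V) : klin g -> forall c u, g (c *: u) = c *: g u.
Proof. by move=> lin_g c u; rewrite -[c *: u]addr0 lin_g klin0 // addr0. Qed.

Lemma klin_sum (g : U -> V) (I : Type) (r : seq I) (P : pred I) (F : I -> U) :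
  klin g -> g (\sum_(i <- r | P i) F i) = \sum_(i <- r | P i) g (F i).
Proof. by move=> lin_g; apply: (big_morph g (klinD lin_g) (klin0 lin_g)). Qed.

Lemma klin_comp (f : V -> W) (g : U -> V) :
  klin f -> klin g -> klin (fun u => f (g u)).
Proof. by move=> lin_f lin_g c u v; rewrite lin_g lin_f. Qed.

Lemma klin_sumf (m : nat) (F : 'I_m -> U -> V) :
  (forall i, klin (F i)) -> klin (fun u => \sum_(i < m) F i u).
Proof.
move=> lin_F c u v; rewrite scaler_sumr -big_split.
by apply: eq_bigr => i _; apply: lin_F.
Qed.

Lemma klin_id : klin (fun u : U => u).
Proof. by []. Qed.

End KLinear.

Lemma klin_mulr (k : fieldType) (R : algType k) (a : R) :
  klin (fun u : R => a * u).
Proof. by move=> c u v; rewrite mulrDr scalerAr. Qed.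

Lemma klin_mull (k : fieldType) (R : algType k) (a : R) :
  klin (fun u : R => u * a).
Proof. by move=> c u v; rewrite mulrDl scalerAl. Qed.

Record strongly_separable_bc (k : fieldType) (R : algType k)
    (S : R -> Prop) (ES : R -> R)
    (n : nat) (r s : 'I_n -> R) (lam : k)
    (R1 : algType k) (tau : R -> R -> R1) (ER : R1 -> R) : Prop :=
  StronglySeparableBc {
  sub_scalar : forall c : k, S c%:A;
  ES_sub : forall m, S (ES m);
  ESD : forall u v, ES (u + v) = ES u + ES v;
  ES_mull : forall u m, S u -> ES (u * m) = u * ES m;
  ES_mulr : forall u m, S u -> ES (m * u) = ES m * u;
  qbasisl : forall m, \sum_(i < n) ES (m * r i) * s i = m;
  qbasisr : forall m, \sum_(i < n) r i * ES (s i * m) = m;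
  ES1 : ES 1 = 1;
  lam_neq0 : lam != 0;
  sum_rs : \sum_(i < n) r i * s i = lam^-1%:A;
  sep_is_bc : is_basic_construction S ES r s lam tau ER }.

Section BasicConstruction.
Variables (k : fieldType) (R : algType k) (S : R -> Prop) (ES : R -> R)
  (n : nat) (r s : 'I_n -> R) (lam : k)
  (R1 : algType k) (tau : R -> R -> R1) (ER : R1 -> R).
Hypothesis bcR : strongly_separable_bc S ES r s lam tau ER.

Local Notation iota := (bc_incl r s tau).
Local Notation e := (tau 1 1).

Lemma ES_klin : klin ES.
Proof.
move=> c u v; rewrite (ESD bcR) -mulr_algl (ES_mull bcR _ (sub_scalar bcR c)).
by rewrite mulr_algl.
Qed.

Lemma ESZ c m : ES (c *: m) = c *: ES m.
Proof. exact: (klinZ ES_klin). Qed.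

Lemma tau_balanced : balanced S tau.
Proof. by case: (sep_is_bc bcR) => [[]]. Qed.

Lemma tau_klinl b : klin (fun a => tau a b).
Proof. by case: tau_balanced. Qed.

Lemma tau_klinr a : klin (tau a).
Proof. by case: tau_balanced. Qed.

Lemma tau_bal a z b : S z -> tau (a * z) b = tau a (z * b).
Proof. by case: tau_balanced => _ _; apply. Qed.

Lemma tau_suml (I : Type) (rr : seq I) (P : pred I) (F : I -> R) b :
  tau (\sum_(i <- rr | P i) F i) b = \sum_(i <- rr | P i) tau (F i) b.
Proof. exact: (klin_sum _ _ _ (tau_klinl b)). Qed.

Lemma tau_sumr (I : Type) (rr : seq I) (P : pred I) (F : I -> R) a :
  tau a (\sum_(i <- rr | P i) F i) = \sum_(i <- rr | P i) tau a (F i).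
Proof. exact: (klin_sum _ _ _ (tau_klinr a)). Qed.

Lemma tauZl c a b : tau (c *: a) b = c *: tau a b.
Proof. exact: (klinZ (tau_klinl b)). Qed.

Lemma tauZr c a b : tau a (c *: b) = c *: tau a b.
Proof. exact: (klinZ (tau_klinr a)). Qed.

Lemma tau_ext (V : lmodType k) (g g' : R1 -> V) : klin g -> klin g' ->
  (forall a b, g (tau a b) = g' (tau a b)) -> forall t, g t = g' t.
Proof.
move=> lin_g lin_g' eq_gg' t; case: (sep_is_bc bcR) => [[_ univ] _ _ _ _].
have bal_g : balanced S (fun a b => g (tau a b)).
  split=> [a|b|a z b Sz]; last by rewrite tau_bal.
  - exact: klin_comp lin_g (tau_klinr a).
  - exact: klin_comp lin_g (tau_klinl b).
by case: (univ V _ bal_g) => _ /(_ g g' lin_g lin_g' eq_gg').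
Qed.

Lemma tau_mul a b c d : tau a b * tau c d = tau (a * ES (b * c)) d.
Proof. by case: (sep_is_bc bcR). Qed.

Lemma one_tau_sum : 1 = \sum_(i < n) tau (r i) (s i).
Proof. by case: (sep_is_bc bcR). Qed.

Lemma ER_klin : klin ER.
Proof. by case: (sep_is_bc bcR). Qed.

Lemma ERZ c w : ER (c *: w) = c *: ER w.
Proof. exact: (klinZ ER_klin). Qed.

Lemma ER_tau a b : ER (tau a b) = lam *: (a * b).
Proof. by case: (sep_is_bc bcR). Qed.

Lemma incl_klin : klin iota.
Proof.
apply: klin_sumf => i.
exact: klin_comp (tau_klinl (s i)) (klin_mull (r i)).
Qed.

Lemma inclD u v : iota (u + v) = iota u + iota v.
Proof. exact: (klinD incl_klin). Qed.

Lemma inclZ c u : iota (c *: u) = c *: iota u.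
Proof. exact: (klinZ incl_klin). Qed.

Lemma incl_sum (I : Type) (rr : seq I) (P : pred I) (F : I -> R) :
  iota (\sum_(i <- rr | P i) F i) = \sum_(i <- rr | P i) iota (F i).
Proof. exact: (klin_sum _ _ _ incl_klin). Qed.

Lemma incl_tau m a b : iota m * tau a b = tau (m * a) b.
Proof.
rewrite /bc_incl mulr_suml; under eq_bigr do rewrite tau_mul.
rewrite -tau_suml; congr tau.
by under eq_bigr do rewrite -mulrA; rewrite -mulr_sumr (qbasisr bcR).
Qed.

Lemma tau_incl m a b : tau a b * iota m = tau a (b * m).
Proof.
rewrite /bc_incl mulr_sumr; under eq_bigr do rewrite tau_mul.
under eq_bigr do rewrite (tau_bal _ _ (ES_sub bcR _)) mulrA.
by rewrite -tau_sumr (qbasisl bcR).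
Qed.

Lemma incl1 : iota 1 = 1.
Proof.
by rewrite /bc_incl; under eq_bigr do rewrite mul1r; rewrite -one_tau_sum.
Qed.

Lemma inclM u v : iota (u * v) = iota u * iota v.
Proof.
by rewrite {3}/bc_incl mulr_sumr; under eq_bigr do rewrite incl_tau mulrA.
Qed.

Lemma tau_Jones a b : tau a b = iota a * e * iota b.
Proof. by rewrite incl_tau tau_incl mulr1 mul1r. Qed.

Lemma tau_r1 a : tau a 1 = iota a * e.
Proof. by rewrite tau_Jones incl1 mulr1. Qed.

Lemma tau_1l b : tau 1 b = e * iota b.
Proof. by rewrite tau_Jones incl1 mul1r. Qed.

Lemma sum_incl_Jones : \sum_(i < n) iota (r i) * e * iota (s i) = 1.
Proof.
by rewrite [RHS]one_tau_sum; apply: eq_bigr => i _; rewrite [RHS]tau_Jones.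
Qed.

Lemma Jones_incl_Jones m : e * iota m * e = iota (ES m) * e.
Proof. by rewrite tau_incl tau_mul incl_tau !mul1r !mulr1. Qed.

Lemma incl_Jones_comm z : S z -> iota z * e = e * iota z.
Proof.
move=> Sz; rewrite incl_tau tau_incl mulr1 mul1r.
by rewrite -{1}[z]mul1r tau_bal // mulr1.
Qed.

Lemma ER_incl m : ER (iota m) = m.
Proof.
rewrite /bc_incl (klin_sum _ _ _ ER_klin).
under eq_bigr do rewrite ER_tau -mulrA.
rewrite -scaler_sumr -mulr_sumr (sum_rs bcR) mulr_algr scalerA.
by rewrite mulfV ?(lam_neq0 bcR) // scale1r.
Qed.

Lemma ER_inclMl u w : ER (iota u * w) = u * ER w.
Proof.
move: w; apply: tau_ext.
- exact: klin_comp ER_klin (klin_mulr _).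
- exact: klin_comp (klin_mulr _) ER_klin.
by move=> a b; rewrite incl_tau !ER_tau -scalerAr mulrA.
Qed.

Lemma ER_inclMr w v : ER (w * iota v) = ER w * v.
Proof.
move: w; apply: tau_ext.
- exact: klin_comp ER_klin (klin_mull _).
- exact: klin_comp (klin_mull _) ER_klin.
by move=> a b; rewrite tau_incl !ER_tau -scalerAl mulrA.
Qed.

Lemma ER1 : ER 1 = 1.
Proof. by rewrite -incl1 ER_incl. Qed.

Lemma ER_incl_Jones_incl u v : ER (iota u * e * iota v) = lam *: (u * v).
Proof. by rewrite -tau_Jones ER_tau. Qed.

Lemma ER_incl_Jones u : ER (iota u * e) = lam *: u.
Proof. by rewrite -tau_r1 ER_tau mulr1. Qed.

Lemma sum_ES_r_s : \sum_(i < n) ES (r i) * s i = 1.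
Proof. by rewrite -[RHS](qbasisl bcR); apply: eq_bigr => i _; rewrite mul1r. Qed.

Lemma sum_r_ES_s : \sum_(i < n) r i * ES (s i) = 1.
Proof. by rewrite -[RHS](qbasisr bcR); apply: eq_bigr => i _; rewrite mulr1. Qed.

(* The Casimir element \sum_i r_i (x) s_i of R (x)_S R centralizes S. *)
Lemma casimir_central (V : lmodType k) (f : R -> R -> V) :
    (forall v, klin (fun u => f u v)) -> (forall u, klin (f u)) ->
    (forall u z v, S z -> f (u * z) v = f u (z * v)) ->
  forall m, \sum_(i < n) f (m * r i) (s i) = \sum_(i < n) f (r i) (s i * m).
Proof.
move=> lin_l lin_r bal m.
transitivity (\sum_(i < n) \sum_(j < n) f (r j) (ES (s j * (m * r i)) * s i)).
  apply: eq_bigr => i _.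
  rewrite -{1}[m * r i](qbasisr bcR) (klin_sum _ _ _ (lin_l _)).
  by apply: eq_bigr => j _; apply: bal (ES_sub bcR _).
rewrite exchange_big; apply: eq_bigr => j _ /=.
rewrite -(klin_sum _ _ _ (lin_r _)); congr f.
by rewrite -[RHS](qbasisl bcR); apply: eq_bigr => i _; rewrite mulrA.
Qed.

Lemma ES_ER_Jones_sym w : ES (ER (e * w)) = ES (ER (w * e)).
Proof.
move: w; apply: tau_ext.
- exact: klin_comp ES_klin (klin_comp ER_klin (klin_mulr _)).
- exact: klin_comp ES_klin (klin_comp ER_klin (klin_mull _)).
move=> a b; rewrite !tau_mul !ER_tau !ESZ !mul1r !mulr1.
by rewrite (ES_mull bcR _ (ES_sub bcR a)) (ES_mulr bcR _ (ES_sub bcR b)).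
Qed.

Lemma qbasisl_ER w :
  \sum_(i < n) iota (ER (w * tau (lam^-1 *: r i) 1)) * tau 1 (s i) = w.
Proof.
have nz_lam := lam_neq0 bcR.
move: w; apply: tau_ext.
- apply: klin_sumf => i; apply: klin_comp (klin_mull _) _.
  exact: klin_comp incl_klin (klin_comp ER_klin (klin_mull _)).
- exact: klin_id.
move=> a b; under eq_bigr do rewrite tau_mul ER_tau mulr1 -scalerAr ESZ
  -scalerAr scalerA mulfV // scale1r incl_tau mulr1 (tau_bal _ _ (ES_sub bcR _)).
by rewrite -tau_sumr (qbasisl bcR).
Qed.

Lemma qbasisr_ER w :
  \sum_(i < n) tau (lam^-1 *: r i) 1 * iota (ER (tau 1 (s i) * w)) = w.
Proof.
have nz_lam := lam_neq0 bcR.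
move: w; apply: tau_ext.
- apply: klin_sumf => i; apply: klin_comp (klin_mulr _) _.
  exact: klin_comp incl_klin (klin_comp ER_klin (klin_mulr _)).
- exact: klin_id.
move=> a b; under eq_bigr do rewrite tau_mul ER_tau mul1r tau_incl mul1r tauZl
  tauZr scalerA mulVf // scale1r -(tau_bal _ _ (ES_sub bcR _)).
by rewrite -tau_suml (qbasisr bcR).
Qed.

Lemma sum_rs_next :
  \sum_(i < n) tau (lam^-1 *: r i) 1 * tau 1 (s i) = lam^-1%:A.
Proof.
under eq_bigr do rewrite tau_mul mulr1 (ES1 bcR) mulr1 tauZl.
by rewrite -scaler_sumr -one_tau_sum.
Qed.

Lemma strongly_separable_bc_next
    (R2 : algType k) (tau' : R1 -> R1 -> R2) (ER' : R2 -> R1) :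
  is_basic_construction (fun z : R1 => exists m : R, z = iota m)
    (fun z : R1 => iota (ER z)) (fun i => tau (lam^-1 *: r i) 1)
    (fun i => tau 1 (s i)) lam tau' ER' ->
  strongly_separable_bc (fun z : R1 => exists m : R, z = iota m)
    (fun z : R1 => iota (ER z)) (fun i => tau (lam^-1 *: r i) 1)
    (fun i => tau 1 (s i)) lam tau' ER'.
Proof.
move=> bcR1; split=> //.
- by move=> c; exists c%:A; rewrite inclZ incl1.
- by move=> w; exists (ER w).
- by move=> u v; rewrite (klinD ER_klin) inclD.
- by move=> _ w [u ->]; rewrite ER_inclMl inclM.
- by move=> _ w [u ->]; rewrite ER_inclMr inclM.
- exact: qbasisl_ER.
- exact: qbasisr_ER.
- by rewrite ER1 incl1.
- exact: lam_neq0 bcR.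
- exact: sum_rs_next.
Qed.

End BasicConstruction.

Section JonesTower.
Variables (k : fieldType) (M : algType k) (N : M -> Prop).
Hypothesis N1 : N 1.
Hypothesis Nlin : forall (c : k) (u v : M), N u -> N v -> N (c *: u + v).
Variable E : M -> M.
Hypothesis EN : forall m, N (E m).
Hypothesis Eadd : forall u v, E (u + v) = E u + E v.
Hypothesis Ebil : forall u m, N u -> E (u * m) = u * E m.
Hypothesis Ebir : forall u m, N u -> E (m * u) = E m * u.
Variables (n : nat) (x y : 'I_n -> M) (lam : k).
Hypothesis qb1 : forall m, \sum_(i < n) E (m * x i) * y i = m.
Hypothesis qb2 : forall m, \sum_(i < n) x i * E (y i * m) = m.
Hypothesis E1 : E 1 = 1.
Hypothesis lam0 : lam != 0.
Hypothesis sumxy : \sum_(i < n) x i * y i = lam^-1%:A.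
Variables (M1 : algType k) (tau1 : M -> M -> M1) (EM : M1 -> M).
Hypothesis bc1 : is_basic_construction N E x y lam tau1 EM.
Variables (M2 : algType k) (tau2 : M1 -> M1 -> M2) (EM1 : M2 -> M1).
Hypothesis bc2 : is_basic_construction
  (fun z : M1 => exists m : M, z = bc_incl x y tau1 m)
  (fun z : M1 => bc_incl x y tau1 (EM z))
  (fun i => tau1 (lam^-1 *: x i) 1) (fun i => tau1 1 (y i))
  lam tau2 EM1.

Local Notation i1 := (bc_incl x y tau1).
Local Notation e1 := (tau1 1 1).
Local Notation i2 :=
  (bc_incl (fun i => tau1 (lam^-1 *: x i) 1) (fun i => tau1 1 (y i)) tau2).
Local Notation e2 := (tau2 1 1).

Lemma sepN : strongly_separable_bc N E x y lam tau1 EM.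
Proof.
have N0 : N 0 by have := Nlin (-1) N1 N1; rewrite scaleN1r addNr.
by split=> // c; have := Nlin c N1 N0; rewrite addr0.
Qed.

Lemma sepM : strongly_separable_bc (fun z : M1 => exists m : M, z = i1 m)
  (fun z : M1 => i1 (EM z)) (fun i => tau1 (lam^-1 *: x i) 1)
  (fun i => tau1 1 (y i)) lam tau2 EM1.
Proof. exact: (strongly_separable_bc_next sepN bc2). Qed.

Local Ltac klin_auto := repeat first [ exact: klin_id
  | apply: klin_comp (klin_mull _) _ | apply: klin_comp (klin_mulr _) _
  | apply: klin_comp (incl_klin sepN) _ | apply: klin_comp (incl_klin sepM) _
  | apply: klin_comp (ER_klin sepN) _ | apply: klin_comp (ER_klin sepM) _
  | apply: klin_comp (ES_klin sepN) _ ].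

Definition inA (a : M1) := forall m, N m -> a * i1 m = i1 m * a.
Definition inB (b : M2) :=
  centralizer (fun z : M2 => exists u : M, z = i2 (i1 u)) b.
Definition inC (c : M2) :=
  centralizer (fun z : M2 => exists u, N u /\ z = i2 (i1 u)) c.

Lemma centralizer_inA a :
  centralizer (fun z : M1 => exists u, N u /\ z = i1 u) a -> inA a.
Proof. by move=> cNa m Nm; apply: cNa; exists m. Qed.

Lemma inB_comm b : inB b -> forall m, b * i2 (i1 m) = i2 (i1 m) * b.
Proof. by move=> Bb m; apply: Bb; exists m. Qed.

Lemma inB_inC b : inB b -> inC b.
Proof. by move=> Bb _ [u [_ ->]]; apply: inB_comm. Qed.

Lemma e2_commM m : i2 (i1 m) * e2 = e2 * i2 (i1 m).
Proof. by apply: (incl_Jones_comm sepM); exists m. Qed.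

Lemma e1_commN m : N m -> i1 m * e1 = e1 * i1 m.
Proof. exact: (incl_Jones_comm sepN). Qed.

Lemma i2e1_commN m : N m -> i2 (i1 m) * i2 e1 = i2 e1 * i2 (i1 m).
Proof. by move=> Nm; rewrite -!(inclM sepM) e1_commN. Qed.

Lemma i2A_commN a m : inA a -> N m -> i2 (i1 m) * i2 a = i2 a * i2 (i1 m).
Proof. by move=> Aa Nm; rewrite -!(inclM sepM) Aa. Qed.

Fact beta_key : unit. Proof. exact: tt. Qed.
Definition beta (b : M2) := locked_with beta_key (lam^-1 *: EM1 (b * i2 e1 * e2)).

Lemma EM1_beta b : EM1 (b * i2 e1 * e2) = lam *: beta b.
Proof. by rewrite /beta unlock scalerA mulfV // scale1r. Qed.

Lemma beta_inA b : inB b -> inA (beta b).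
Proof.
move=> Bb m Nm; apply: (scalerI lam0); rewrite scalerAl scalerAr -EM1_beta.
rewrite -(ER_inclMr sepM) -(ER_inclMl sepM); congr EM1.
rewrite -mulrA -e2_commM mulrA -(mulrA b) -i2e1_commN // mulrA.
by rewrite (inB_comm Bb) !mulrA.
Qed.

Lemma EM1_inB_incl_Jones b u : inB b ->
  EM1 (b * i2 e1 * i2 (i1 u * e1) * e2) = lam *: (i1 (E u) * beta b).
Proof.
move=> Bb.
have -> : b * i2 e1 * i2 (i1 u * e1) = i2 (i1 (E u)) * (b * i2 e1).
  rewrite -mulrA -(inclM sepM) mulrA (Jones_incl_Jones sepN) (inclM sepM).
  by rewrite mulrA (inB_comm Bb) mulrA.
by rewrite -mulrA (ER_inclMl sepM) EM1_beta scalerAr.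
Qed.

Lemma inB_mul_e1 b : inB b -> b * i2 e1 = lam^-1 *: (i2 (beta b) * e2 * i2 e1).
Proof.
move=> Bb; have Ab := beta_inA Bb.
rewrite -[b * i2 e1](qbasisl_ER sepM) /=.
have term i : i2 (EM1 (b * i2 e1 * tau2 (lam^-1 *: tau1 (lam^-1 *: x i) 1) 1))
    * tau2 1 (tau1 1 (y i))
  = lam^-1 *: (i2 (beta b) * e2 * i2 e1 * i2 (i1 (E (x i) * y i))).
  rewrite (tau_r1 sepM (_ *: _)) (tauZl sepN) (tau_r1 sepN (x i)).
  rewrite (tau_1l sepM (tau1 1 (y i))) (tau_1l sepN (y i)).
  rewrite !(inclZ sepM) -!scalerAl -!scalerAr !(ERZ sepM) (mulrA (b * i2 e1)).
  rewrite EM1_inB_incl_Jones // !scalerA -mulrA mulVf // mulr1 (inclZ sepM).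
  rewrite -scalerAl; congr (_ *: _).
  rewrite -(Ab _ (EN _)) !(inclM sepN) !(inclM sepM) !mulrA.
  rewrite -(mulrA _ (i2 (i1 (E (x i)))) e2) e2_commM mulrA.
  by rewrite -(mulrA _ (i2 (i1 (E (x i)))) (i2 e1)) (i2e1_commN (EN _)) mulrA.
under eq_bigr do rewrite term.
rewrite -scaler_sumr -mulr_sumr -(incl_sum sepM) -(incl_sum sepN).
by rewrite (sum_ES_r_s sepN) (incl1 sepN) (incl1 sepM) mulr1.
Qed.

Definition beta_inv (a : M1) := lam^-1 *: \sum_(i < n)
  i2 (i1 (x i)) * i2 a * e2 * i2 e1 * i2 (i1 (y i)).

Lemma betaK b : inB b -> beta_inv (beta b) = b.
Proof.
move=> Bb; rewrite -[RHS]mulr1 -(incl1 sepM) -(sum_incl_Jones sepN).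
rewrite (incl_sum sepM) mulr_sumr /beta_inv scaler_sumr; apply: eq_bigr => i _.
rewrite !(inclM sepM) !mulrA (inB_comm Bb) -!mulrA (mulrA b) inB_mul_e1 //.
by rewrite -scalerAl -scalerAr !mulrA.
Qed.

Lemma beta_inv_inB a : inA a -> inB (beta_inv a).
Proof.
move=> Aa _ [m ->]; rewrite /beta_inv -scalerAl -scalerAr; congr (_ *: _).
pose f u v := i2 (i1 u) * i2 a * e2 * i2 e1 * i2 (i1 v).
transitivity (\sum_(i < n) f (x i) (y i * m)).
  rewrite mulr_suml; apply: eq_bigr => i _.
  by rewrite /f !(inclM sepN) !(inclM sepM) !mulrA.
transitivity (\sum_(i < n) f (m * x i) (y i)); last first.
  rewrite mulr_sumr; apply: eq_bigr => i _.
  by rewrite /f !(inclM sepN) !(inclM sepM) !mulrA.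
symmetry; apply: (casimir_central sepN); try by move=> ?; rewrite /f; klin_auto.
move=> u m' v Nm'; rewrite /f !(inclM sepN) !(inclM sepM) !mulrA.
rewrite -(mulrA (i2 (i1 u))) (i2A_commN Aa Nm') mulrA.
rewrite -(mulrA _ (i2 (i1 m')) e2) e2_commM mulrA.
by rewrite -(mulrA _ (i2 (i1 m')) (i2 e1)) (i2e1_commN Nm') mulrA.
Qed.

Lemma beta_invK a : inA a -> beta (beta_inv a) = a.
Proof.
move=> Aa; apply: (scalerI lam0); rewrite -EM1_beta /beta_inv -!scalerAl.
rewrite (ERZ sepM) 2!mulr_suml.
have term i : i2 (i1 (x i)) * i2 a * e2 * i2 e1 * i2 (i1 (y i)) * i2 e1 * e2
    = lam *: (i2 (i1 (x i * E (y i)) * a) * e2).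
  have Jy : e2 * i2 (e1 * i1 (y i) * e1) * e2 = lam *: (i2 (i1 (E (y i))) * e2).
    rewrite (Jones_incl_Jones sepM) (Jones_incl_Jones sepN) (ER_incl_Jones sepN).
    by rewrite (inclZ sepN) (inclZ sepM) -scalerAl.
  transitivity (i2 (i1 (x i)) * i2 a * (e2 * i2 (e1 * i1 (y i) * e1) * e2)).
    by rewrite !(inclM sepM) !mulrA.
  rewrite Jy -scalerAr; congr (_ *: _).
  rewrite (inclM sepN) !(inclM sepM) !mulrA -(mulrA (i2 (i1 (x i)))).
  by rewrite (i2A_commN Aa (EN _)) mulrA.
under eq_bigr do rewrite term.
rewrite -scaler_sumr -mulr_suml -(incl_sum sepM) -mulr_suml -(incl_sum sepN).
rewrite (sum_r_ES_s sepN) (incl1 sepN) mul1r (ERZ sepM) (ER_incl_Jones sepM).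
by rewrite scalerA mulVf // scale1r.
Qed.

Fact theta_key : unit. Proof. exact: tt. Qed.
Definition theta (a : M1) := locked_with theta_key
  (lam^-1 *: \sum_(i < n) i1 (EM (e1 * i1 (x i) * a)) * e1 * i1 (y i)).

Lemma thetaE a : theta a =
  lam^-1 *: \sum_(i < n) i1 (EM (e1 * i1 (x i) * a)) * e1 * i1 (y i).
Proof. by rewrite /theta unlock. Qed.

Lemma EM1_Jones_theta_beta b :
  inB b -> EM1 (e2 * i2 e1 * b) = lam *: theta (beta b).
Proof.
move=> Bb; rewrite -{1}(betaK Bb) /beta_inv -scalerAr mulr_sumr (ERZ sepM).
rewrite (klin_sum _ _ _ (ER_klin sepM)).
have term i :
    e2 * i2 e1 * (i2 (i1 (x i)) * i2 (beta b) * e2 * i2 e1 * i2 (i1 (y i)))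
  = i2 (i1 (EM (e1 * i1 (x i) * beta b))) * e2 * i2 (e1 * i1 (y i)).
  by rewrite -(Jones_incl_Jones sepM) !(inclM sepM) !mulrA.
under eq_bigr do rewrite term (ER_incl_Jones_incl sepM).
rewrite thetaE -scaler_sumr !scalerA mulVf // mulfV // !scale1r.
by apply: eq_bigr => i _; rewrite mulrA.
Qed.

Lemma theta_Jones a v : inA a ->
  theta a * i1 v * e1 = lam^-1 *: (i1 (EM (e1 * i1 v * a)) * e1).
Proof.
move=> Aa; rewrite thetaE -!scalerAl; congr (_ *: _); rewrite 2!mulr_suml.
have term i : i1 (EM (e1 * i1 (x i) * a)) * e1 * i1 (y i) * i1 v * e1
    = i1 (EM (e1 * i1 (x i * E (y i * v)) * a)) * e1.
  rewrite -!mulrA (mulrA (i1 (y i))) -(inclM sepN) (mulrA e1 (i1 (y i * v))).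
  rewrite (Jones_incl_Jones sepN) mulrA -(inclM sepN); congr (i1 _ * _).
  by rewrite -(ER_inclMr sepN) -!mulrA (Aa _ (EN _)) (inclM sepN) !mulrA.
under eq_bigr do rewrite term.
rewrite -{2}[v](qbasisr sepN) (incl_sum sepN) mulr_sumr mulr_suml.
by rewrite (klin_sum _ _ _ (ER_klin sepN)) (incl_sum sepN) mulr_suml.
Qed.

Lemma EM_theta a v : inA a -> EM (theta a * i1 v * e1) = EM (e1 * i1 v * a).
Proof.
move=> Aa; rewrite theta_Jones // (ERZ sepN) (ER_incl_Jones sepN).
by rewrite scalerA mulVf // scale1r.
Qed.

Lemma theta_inj a1 a2 : inA a1 -> inA a2 -> theta a1 = theta a2 -> a1 = a2.
Proof.
move=> Aa1 Aa2 eq_theta.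
have eq_v v : EM (e1 * i1 v * a1) = EM (e1 * i1 v * a2).
  by rewrite -!EM_theta // eq_theta.
have eq_w w : EM (e1 * w * a1) = EM (e1 * w * a2).
  move: w; apply: (tau_ext sepN); try by klin_auto.
  move=> u v; rewrite (tau_mul sepN) !mul1r (tau_Jones sepN (E u)).
  by rewrite -!mulrA !(ER_inclMl sepN) !mulrA eq_v.
have eq_all w : EM (w * a1) = EM (w * a2).
  rewrite -[w]mul1r -(sum_incl_Jones sepN) !mulr_suml.
  rewrite !(klin_sum _ _ _ (ER_klin sepN)); apply: eq_bigr => i _.
  by rewrite -!mulrA !(ER_inclMl sepN) !mulrA -(mulrA e1) eq_w mulrA.
rewrite -[a1](qbasisr_ER sepN) -[a2](qbasisr_ER sepN).
by apply: eq_bigr => i _; rewrite eq_all.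
Qed.

Lemma theta_inA a : inA a -> inA (theta a).
Proof.
move=> Aa m Nm; rewrite thetaE -scalerAl -scalerAr; congr (_ *: _).
pose f u v := i1 (EM (e1 * i1 u * a)) * e1 * i1 v.
transitivity (\sum_(i < n) f (x i) (y i * m)).
  by rewrite mulr_suml; apply: eq_bigr => i _; rewrite /f (inclM sepN) mulrA.
transitivity (\sum_(i < n) f (m * x i) (y i)); last first.
  rewrite mulr_sumr; apply: eq_bigr => i _.
  rewrite /f !mulrA -(inclM sepN) -(ER_inclMl sepN) !mulrA (e1_commN Nm).
  by rewrite (inclM sepN m) mulrA.
symmetry; apply: (casimir_central sepN); try by move=> ?; rewrite /f; klin_auto.
move=> u m' v Nm'; rewrite /f !(inclM sepN) !mulrA -(mulrA _ (i1 m') a).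
rewrite -(Aa _ Nm') mulrA (ER_inclMr sepN) (inclM sepN).
by rewrite -(mulrA _ (i1 m') e1) (e1_commN Nm') !mulrA.
Qed.

Definition F (z : M2) := EM (EM1 z).

Lemma F_beta_inv_l a0 a a' : F (beta_inv a0 * (i2 a * e2 * i2 a')) =
  \sum_(i < n) EM (i1 (x i) * a0 * i1 (EM (e1 * i1 (y i) * a)) * a').
Proof.
rewrite /F /beta_inv -scalerAl mulr_suml !(ERZ sepM, ERZ sepN).
rewrite (klin_sum _ _ _ (ER_klin sepM)) (klin_sum _ _ _ (ER_klin sepN)).
rewrite scaler_sumr; apply: eq_bigr => i _.
have -> : i2 (i1 (x i)) * i2 a0 * e2 * i2 e1 * i2 (i1 (y i)) * (i2 a * e2 * i2 a')
    = i2 (i1 (x i) * a0 * i1 (EM (e1 * i1 (y i) * a))) * e2 * i2 a'.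
  transitivity (i2 (i1 (x i) * a0) * (e2 * i2 (e1 * i1 (y i) * a) * e2) * i2 a').
    by rewrite !(inclM sepM) !mulrA.
  by rewrite (Jones_incl_Jones sepM) !(inclM sepM) !mulrA.
by rewrite (ER_incl_Jones_incl sepM) (ERZ sepN) scalerA mulVf // scale1r.
Qed.

Lemma F_beta_inv_r a0 a a' : F (i2 a * e2 * i2 a' * beta_inv a0) =
  \sum_(i < n) EM (a * i1 (EM (a' * i1 (x i) * a0)) * (e1 * i1 (y i))).
Proof.
rewrite /F /beta_inv -scalerAr mulr_sumr !(ERZ sepM, ERZ sepN).
rewrite (klin_sum _ _ _ (ER_klin sepM)) (klin_sum _ _ _ (ER_klin sepN)).
rewrite scaler_sumr; apply: eq_bigr => i _.
have -> : i2 a * e2 * i2 a' * (i2 (i1 (x i)) * i2 a0 * e2 * i2 e1 * i2 (i1 (y i)))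
    = i2 (a * i1 (EM (a' * i1 (x i) * a0))) * e2 * i2 (e1 * i1 (y i)).
  transitivity (i2 a * (e2 * i2 (a' * i1 (x i) * a0) * e2) * i2 (e1 * i1 (y i))).
    by rewrite !(inclM sepM) !mulrA.
  by rewrite (Jones_incl_Jones sepM) !(inclM sepM) !mulrA.
by rewrite (ER_incl_Jones_incl sepM) (ERZ sepN) scalerA mulVf // scale1r.
Qed.

Lemma F_beta_inv_l_tau a0 u v a' : inA a0 ->
  F (beta_inv a0 * (i2 (tau1 u v) * e2 * i2 a')) =
  lam *: (u * EM (a0 * i1 v * a')).
Proof.
move=> Aa0; rewrite F_beta_inv_l.
under eq_bigr do rewrite -(mulrA e1) (incl_tau sepN) (tau_mul sepN) !mul1r
  (ER_tau sepN) (inclZ sepN) (inclM sepN) -!scalerAr -!scalerAl (ERZ sepN)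
  !mulrA -(mulrA (i1 (x _)) a0) (Aa0 _ (EN _)) mulrA -(inclM sepN) -!mulrA
  (ER_inclMl sepN).
by rewrite -scaler_sumr -mulr_suml (qbasisr sepN) !mulrA.
Qed.

Lemma F_beta_inv_r_tau a0 u v a' :
  F (i2 (tau1 u v) * e2 * i2 a' * beta_inv a0) =
  lam *: (u * \sum_(i < n) E (v * EM (a' * i1 (x i) * a0)) * y i).
Proof.
rewrite F_beta_inv_r mulr_sumr scaler_sumr; apply: eq_bigr => i _.
rewrite (tau_incl sepN) mulrA (tau_mul sepN) mulr1 (tau_incl sepN) mul1r.
by rewrite (ER_tau sepN) !mulrA.
Qed.

Lemma E_EM_theta2 a u v : inA a ->
  E (u * EM (e1 * i1 v * a)) = E (EM (theta (theta a) * i1 u * e1) * v).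
Proof.
move=> Aa; rewrite -(EM_theta v Aa) (EM_theta u (theta_inA Aa)).
rewrite -(ER_inclMl sepN) -(ER_inclMr sepN) !mulrA.
by rewrite -(ES_ER_Jones_sym sepN) !mulrA.
Qed.

Lemma EM_theta2 a v a' : inA a ->
  EM (theta (theta a) * i1 v * a') =
  \sum_(i < n) E (v * EM (a' * i1 (x i) * a)) * y i.
Proof.
move=> Aa; move: a'; apply: (tau_ext sepN).
- by klin_auto.
- by apply: klin_sumf => i; klin_auto.
move=> u' v'.
rewrite -(mulrA _ (i1 v)) (incl_tau sepN) (tau_Jones sepN (v * u') v') !mulrA.
rewrite (ER_inclMr sepN) -[LHS](qbasisl sepN); apply: eq_bigr => i _.
rewrite (tau_incl sepN) (tau_Jones sepN u' (v' * x i)) -!mulrA (ER_inclMl sepN).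
by rewrite !mulrA -(mulrA (EM _) v') -E_EM_theta2.
Qed.

Lemma F_beta_inv_theta2 b a a' : inA b ->
  F (beta_inv (theta (theta b)) * (i2 a * e2 * i2 a')) =
  F ((i2 a * e2 * i2 a') * beta_inv b).
Proof.
move=> Ab; have Ab2 := theta_inA (theta_inA Ab).
move: a; apply: (tau_ext sepN); rewrite /F; try by klin_auto.
by move=> u v; rewrite -!/(F _) F_beta_inv_l_tau // F_beta_inv_r_tau EM_theta2.
Qed.

Variables (dA : nat) (basA : 'I_dA -> M1).
Hypothesis basA_cent :
  forall j, centralizer (fun z : M1 => exists u, N u /\ z = i1 u) (basA j).
Hypothesis basA_span : forall z : M1, exists c : 'I_dA -> M,
  z = \sum_(j < dA) basA j * i1 (c j).

Lemma EM1_Jones_ext d1 d2 :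
    (forall a, inA a -> EM1 (d1 * i2 a * e2) = EM1 (d2 * i2 a * e2)) ->
  forall w, EM1 (d1 * i2 w * e2) = EM1 (d2 * i2 w * e2).
Proof.
move=> eqA w; have [c ->] := basA_span w.
rewrite !(incl_sum sepM) !mulr_sumr !mulr_suml !(klin_sum _ _ _ (ER_klin sepM)).
apply: eq_bigr => j _; rewrite !(inclM sepM) !mulrA.
rewrite -!(mulrA _ (i2 (i1 (c j))) e2) e2_commM !mulrA !(ER_inclMr sepM).
by rewrite eqA //; apply/centralizer_inA/basA_cent.
Qed.

Lemma EM1_Jones_inA_ext d1 d2 :
    (forall a a', inA a -> inA a' ->
       F (d1 * (i2 a * e2 * i2 a')) = F (d2 * (i2 a * e2 * i2 a'))) ->
  forall a, inA a -> EM1 (d1 * i2 a * e2) = EM1 (d2 * i2 a * e2).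
Proof.
move=> eqF a0 Aa0.
set u1 := EM1 (d1 * _ * _); set u2 := EM1 (d2 * _ * _).
have eqEM w : EM (u1 * w) = EM (u2 * w).
  have [c ->] := basA_span w; rewrite !mulr_sumr !(klin_sum _ _ _ (ER_klin sepN)).
  apply: eq_bigr => j _; rewrite !mulrA !(ER_inclMr sepN); congr (_ * _).
  rewrite /u1 /u2 -!(ER_inclMr sepM) -!mulrA (mulrA (i2 a0)).
  exact: eqF Aa0 (centralizer_inA (basA_cent j)).
rewrite -[u1](qbasisl_ER sepN) -[u2](qbasisl_ER sepN).
by under eq_bigr do rewrite eqEM.
Qed.

Lemma F_faithful d1 d2 :
    (forall a a', inA a -> inA a' ->
       F (d1 * (i2 a * e2 * i2 a')) = F (d2 * (i2 a * e2 * i2 a'))) ->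
  d1 = d2.
Proof.
move=> /EM1_Jones_inA_ext/EM1_Jones_ext eqEM1.
rewrite -[d1](qbasisl_ER sepM) -[d2](qbasisl_ER sepM); apply: eq_bigr => i _ /=.
by rewrite (tau_r1 sepM (_ *: _)) !mulrA eqEM1.
Qed.

Variable q : M2 -> M2.
Hypothesis qNak : forall c c', inC c -> inC c' -> F (q c * c') = F (c' * c).

Lemma q_beta_inv b : inB b -> q b = beta_inv (theta (theta (beta b))).
Proof.
move=> Bb; apply: F_faithful => a a' Aa Aa'.
have Cc : inC (i2 a * e2 * i2 a').
  move=> _ [m [Nm ->]].
  rewrite -!mulrA -(i2A_commN Aa' Nm) (mulrA e2) -e2_commM -mulrA.
  by rewrite (mulrA (i2 a)) -(i2A_commN Aa Nm) !mulrA.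
rewrite qNak //; last exact: inB_inC.
by rewrite -{1}(betaK Bb) F_beta_inv_theta2 //; apply: beta_inA.
Qed.

Lemma beta_q b : inB b -> beta (q b) = theta (theta (beta b)).
Proof.
move=> Bb; rewrite q_beta_inv // beta_invK //.
exact/theta_inA/theta_inA/beta_inA.
Qed.

Lemma inB_q b : inB b -> inB (q b).
Proof.
move=> Bb; rewrite q_beta_inv //.
exact/beta_inv_inB/theta_inA/theta_inA/beta_inA.
Qed.

Variable S : M2 -> M2.
Hypothesis SB : forall b, inB b -> inB (S b).
Hypothesis Sdef :
  forall b, inB b -> EM1 (b * i2 e1 * e2) = EM1 (e2 * i2 e1 * S b).

Lemma beta_S b : inB b -> beta b = theta (beta (S b)).
Proof.
move=> Bb; apply: (scalerI lam0).
by rewrite -EM1_beta Sdef // EM1_Jones_theta_beta //; apply: SB.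
Qed.

Lemma beta_inj b1 b2 : inB b1 -> inB b2 -> beta b1 = beta b2 -> b1 = b2.
Proof. by move=> Bb1 Bb2 eq_beta; rewrite -(betaK Bb1) eq_beta betaK. Qed.

Lemma antipode_sq_Nakayama b : inB b -> S (S (q b)) = b /\ q (S (S b)) = b.
Proof.
move=> Bb; have Bqb := inB_q Bb; split.
- have BS2qb := SB (SB Bqb); apply: (beta_inj BS2qb Bb).
  apply: (theta_inj (beta_inA BS2qb) (beta_inA Bb)).
  apply: (theta_inj (theta_inA (beta_inA BS2qb)) (theta_inA (beta_inA Bb))).
  by rewrite -(beta_S (SB Bqb)) -(beta_S Bqb) (beta_q Bb).
- have BS2b := SB (SB Bb); apply: (beta_inj (inB_q BS2b) Bb).
  by rewrite (beta_q BS2b) -(beta_S (SB Bb)) -(beta_S Bb).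
Qed.

End JonesTower.

Theorem proposition4p10
  (k : fieldType) (M : algType k) (N : M -> Prop)
  (* N is a k-subalgebra of M *)
  (N1 : N 1)
  (Nlin : forall (c : k) (u v : M), N u -> N v -> N (c *: u + v))
  (Nmul : forall u v : M, N u -> N v -> N (u * v))
  (* irreducible: C_M(N) = k1 *)
  (irr : forall m : M, centralizer N m -> exists c : k, m = c%:A)
  (* E : M -> N an N-bimodule map *)
  (E : M -> M)
  (EN : forall m, N (E m))
  (Eadd : forall u v, E (u + v) = E u + E v)
  (Ebil : forall u m, N u -> E (u * m) = u * E m)
  (Ebir : forall u m, N u -> E (m * u) = E m * u)
  (* quasi-basis, normalized *)
  (n : nat) (x y : 'I_n -> M) (lam : k)
  (qb1 : forall m, \sum_(i < n) E (m * x i) * y i = m)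
  (qb2 : forall m, \sum_(i < n) x i * E (y i * m) = m)
  (E1 : E 1 = 1)
  (lam0 : lam != 0)
  (sumxy : \sum_(i < n) x i * y i = lam^-1%:A)
  (* first basic construction N c M c M1 *)
  (M1 : algType k) (tau1 : M -> M -> M1) (EM : M1 -> M)
  (bc1 : is_basic_construction N E x y lam tau1 EM)
  (* second basic construction M c M1 c M2 *)
  (M2 : algType k) (tau2 : M1 -> M1 -> M2) (EM1 : M2 -> M1)
  (bc2 : is_basic_construction
           (fun z : M1 => exists m : M, z = bc_incl x y tau1 m)
           (fun z : M1 => bc_incl x y tau1 (EM z))
           (fun i => tau1 (lam^-1 *: x i) 1) (fun i => tau1 1 (y i))
           lam tau2 EM1)
  (* depth 2: M1 free as right M-module with a (finite) basis in A = C_M1(N) *)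
  (depthA : exists (m : nat) (a : 'I_m -> M1),
     (forall j, centralizer (fun z : M1 => exists u, N u /\ z = bc_incl x y tau1 u) (a j)) /\
     (forall z : M1, exists c : 'I_m -> M,
        z = \sum_(j < m) a j * bc_incl x y tau1 (c j)) /\
     (forall c : 'I_m -> M,
        \sum_(j < m) a j * bc_incl x y tau1 (c j) = 0 -> forall j, c j = 0))
  (* depth 2: M2 free as right M1-module with a (finite) basis in B = C_M2(M) *)
  (depthB : exists (m : nat) (b : 'I_m -> M2),
     (forall j, centralizer (fun z : M2 => exists u : M,
          z = bc_incl (fun i => tau1 (lam^-1 *: x i) 1) (fun i => tau1 1 (y i)) tau2
                (bc_incl x y tau1 u)) (b j)) /\
     (forall z : M2, exists c : 'I_m -> M1,
        z = \sum_(j < m) b j * bc_incl (fun i => tau1 (lam^-1 *: x i) 1)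
                                       (fun i => tau1 1 (y i)) tau2 (c j)) /\
     (forall c : 'I_m -> M1,
        \sum_(j < m) b j * bc_incl (fun i => tau1 (lam^-1 *: x i) 1)
                                   (fun i => tau1 1 (y i)) tau2 (c j) = 0 ->
        forall j, c j = 0))
  (* Nakayama automorphism q of F = E_M o E_M1 on C = C_M2(N) *)
  (q : M2 -> M2)
  (qC : forall c, centralizer (fun z : M2 => exists u, N u /\
          z = bc_incl (fun i => tau1 (lam^-1 *: x i) 1) (fun i => tau1 1 (y i)) tau2
                (bc_incl x y tau1 u)) c ->
        centralizer (fun z : M2 => exists u, N u /\
          z = bc_incl (fun i => tau1 (lam^-1 *: x i) 1) (fun i => tau1 1 (y i)) tau2
                (bc_incl x y tau1 u)) (q c))
  (qNak : forall c c',
     centralizer (fun z : M2 => exists u, N u /\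
          z = bc_incl (fun i => tau1 (lam^-1 *: x i) 1) (fun i => tau1 1 (y i)) tau2
                (bc_incl x y tau1 u)) c ->
     centralizer (fun z : M2 => exists u, N u /\
          z = bc_incl (fun i => tau1 (lam^-1 *: x i) 1) (fun i => tau1 1 (y i)) tau2
                (bc_incl x y tau1 u)) c' ->
     EM (EM1 (q c * c')) = EM (EM1 (c' * c)))
  (* antipode S : B -> B *)
  (S : M2 -> M2)
  (SB : forall b, centralizer (fun z : M2 => exists u : M,
          z = bc_incl (fun i => tau1 (lam^-1 *: x i) 1) (fun i => tau1 1 (y i)) tau2
                (bc_incl x y tau1 u)) b ->
        centralizer (fun z : M2 => exists u : M,
          z = bc_incl (fun i => tau1 (lam^-1 *: x i) 1) (fun i => tau1 1 (y i)) tau2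
                (bc_incl x y tau1 u)) (S b))
  (Sdef : forall b, centralizer (fun z : M2 => exists u : M,
          z = bc_incl (fun i => tau1 (lam^-1 *: x i) 1) (fun i => tau1 1 (y i)) tau2
                (bc_incl x y tau1 u)) b ->
     EM1 (b * bc_incl (fun i => tau1 (lam^-1 *: x i) 1) (fun i => tau1 1 (y i)) tau2
                 (tau1 1 1) * tau2 1 1)
     = EM1 (tau2 1 1 * bc_incl (fun i => tau1 (lam^-1 *: x i) 1) (fun i => tau1 1 (y i)) tau2
                 (tau1 1 1) * S b)) :
  forall b, centralizer (fun z : M2 => exists u : M,
          z = bc_incl (fun i => tau1 (lam^-1 *: x i) 1) (fun i => tau1 1 (y i)) tau2
                (bc_incl x y tau1 u)) b ->
    S (S (q b)) = b /\ q (S (S b)) = b.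
Proof.
case: depthA => dA [basA [basA_cent [basA_span _]]] b Bb.
exact: (antipode_sq_Nakayama N1 Nlin EN Eadd Ebil Ebir qb1 qb2 E1 lam0 sumxy
  bc1 bc2 basA_cent basA_span qNak SB Sdef Bb).
Qed.
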